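(* Let $(T,[\cdot,\cdot],[\cdot,\cdot,\cdot],\alpha)$ be a Hom-Lie-Yamaguti algebra and $(\rho,D,\theta)$ a representation of $T$ on a Hom-vector space $(V,\beta)$. Then there is a bijection $$\mathrm{Ext}(T,V)\longrightarrow H^2(T,V)\times H^3(T,V)$$ between the set of equivalence classes of abelian extensions of $T$ by $V$ (inducing the given representation) and the (2,3)-cohomology group; that is, abelian extensions of $T$ by $V$ are classified by the (2,3)-cohomology group.
   Context: Throughout, vector spaces are over an algebraically closed field $\mathbb{K}$ of characteristic different from 2 and 3. A Hom-Lie-Yamaguti algebra (HLYA) is a vector space $T$ with a linear map $\alpha:T\to T$, a bilinear map $[\cdot,\cdot]$ and a trilinear map $[\cdot,\cdot,\cdot]$ on $T$ such that for all $x_i,y_i\in T$: (HLY01) $\alpha([x_1,x_2])=[\alpha(x_1),\alpha(x_2)]$; (HLY02) $\alpha([x_1,x_2,x_3])=[\alpha(x_1),\alpha(x_2),\alpha(x_3)]$; (HLY1) $[x_1,x_2]+[x_2,x_1]=0$; (HLY2) $[x_1,x_2,x_3]+[x_2,x_1,x_3]=0$; (HLY3) $\sum_{\mathrm{cyc}(x_1,x_2,x_3)}([[x_1,x_2],\alpha(x_3)]+[x_1,x_2,x_3])=0$; (HLY4) $[[x_1,x_2],\alpha(x_3),\alpha(y_1)]+[[x_2,x_3],\alpha(x_1),\alpha(y_1)]+[[x_3,x_1],\alpha(x_2),\alpha(y_1)]=0$; (HLY5) $[\alpha(x_1),\alpha(x_2),[y_1,y_2]]=[[x_1,x_2,y_1],\alpha^2(y_2)]+[\alpha^2(y_1),[x_1,x_2,y_2]]$;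 (HLY6) $[\alpha^2(x_1),\alpha^2(x_2),[y_1,y_2,y_3]]=[[x_1,x_2,y_1],\alpha^2(y_2),\alpha^2(y_3)]+[\alpha^2(y_1),[x_1,x_2,y_2],\alpha^2(y_3)]+[\alpha^2(y_1),\alpha^2(y_2),[x_1,x_2,y_3]]$. A homomorphism of HLYAs is a linear map intertwining the structure maps and preserving both brackets. A representation of $(T,\alpha)$ on $(V,\beta)$ is a linear map $\rho:T\to\mathrm{End}(V)$ and bilinear maps $D,\theta:T\times T\to\mathrm{End}(V)$ satisfying, for all $x_i,y_i\in T$: (HR01) $\rho(\alpha(x_1))\circ\beta=\beta\circ\rho(x_1)$; (HR02) $D(\alpha(x_1),\alpha(x_2))\circ\beta=\beta\circ D(x_1,x_2)$; (HR03) $\theta(\alpha(x_1),\alpha(x_2))\circ\beta=\beta\circ\theta(x_1,x_2)$; (HR31) $D(x_1,x_2)-\theta(x_2,x_1)+\theta(x_1,x_2)+\rho([x_1,x_2])\circ\beta-\rho(\alpha(x_1))\rho(x_2)+\rho(\alpha(x_2))\rho(x_1)=0$; (HR41) $D([x_1,x_2],\alpha(x_3))+D([x_2,x_3],\alpha(x_1))+D([x_3,x_1],\alpha(x_2))=0$; (HR42) $\theta([x_1,x_2],\alpha(y_1))\circ\beta=\theta(\alpha(x_1),\alpha(y_1))\rho(x_2)-\theta(\alpha(x_2),\alpha(y_1))\rho(x_1)$; (HR51) $D(\alpha(x_1),\alpha(x_2))\rho(y_2)=\rho(\alpha^2(y_2))D(x_1,x_2)+\rho([x_1,x_2,y_2])\circ\beta^2$;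 (HR52) $\theta(\alpha(x_1),[y_1,y_2])\circ\beta=\rho(\alpha^2(y_1))\theta(x_1,y_2)-\rho(\alpha^2(y_2))\theta(x_1,y_1)$; (HR61) $D(\alpha^2(x_1),\alpha^2(x_2))\theta(y_1,y_2)=\theta(\alpha^2(y_1),\alpha^2(y_2))D(x_1,x_2)+\theta([x_1,x_2,y_1],\alpha^2(y_2))\circ\beta^2+\theta(\alpha^2(y_1),[x_1,x_2,y_2])\circ\beta^2$; (HR62) $\theta(\alpha^2(x_1),[y_1,y_2,y_3])\circ\beta^2=\theta(\alpha^2(y_2),\alpha^2(y_3))\theta(x_1,y_1)-\theta(\alpha^2(y_1),\alpha^2(y_3))\theta(x_1,y_2)+D(\alpha^2(y_1),\alpha^2(y_2))\theta(x_1,y_3)$. An extension of $(T,\alpha)$ by $(V,\beta)$ is a HLYA $(\hat T,[\cdot,\cdot]_{\hat T},[\cdot,\cdot,\cdot]_{\hat T},\hat\alpha)$ with an injective linear map $i:V\to\hat T$ satisfying $\hat\alpha\circ i=i\circ\beta$ and a surjective HLYA homomorphism $p:\hat T\to T$ with $\mathrm{Im}(i)=\mathrm{Ker}(p)$. It is abelian if $[u,v]_{\hat T}=0$ and $[u,v,z]_{\hat T}=[u,z,v]_{\hat T}=[z,u,v]_{\hat T}=0$ for all $u,v\in i(V)$, $z\in\hat T$. A section is a linear $\sigma:T\to\hat T$ with $p\circ\sigma=\mathrm{id}_T$ and $\hat\alpha\circ\sigma=\sigma\circ\alpha$; identifying $V$ with $i(V)$, the extension induces the maps $\rho(x)(u)=[\sigma(x),u]_{\hat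 T}$, $D(x_1,x_2)(u)=[\sigma(x_1),\sigma(x_2),u]_{\hat T}$, $\theta(x_1,x_2)(u)=[u,\sigma(x_1),\sigma(x_2)]_{\hat T}$ on $V$, and ''inducing the given representation'' means these coincide with the given $(\rho,D,\theta)$. Two extensions $0\to V\xrightarrow{i}\hat T\xrightarrow{p}T\to0$ and $0\to V\xrightarrow{j}\tilde T\xrightarrow{q}T\to0$ are equivalent if there is a HLYA homomorphism $F:\hat T\to\tilde T$ with $F\circ i=j$ and $q\circ F=p$. $\mathrm{Ext}(T,V)$ is the set of equivalence classes. $C^2(T,V)$: bilinear antisymmetric $\nu:T\times T\to V$ with $\nu(\alpha(x_1),\alpha(x_2))=\beta(\nu(x_1,x_2))$. $C^3(T,V)$: trilinear $\omega:T^3\to V$ with $\omega(x_1,x_2,x_3)=-\omega(x_2,x_1,x_3)$ and $\omega(\alpha(x_1),\alpha(x_2),\alpha(x_3))=\beta(\omega(x_1,x_2,x_3))$. $Z^2(T,V)\times Z^3(T,V)$ is the space of $(\nu,\omega)\in C^2\times C^3$ satisfying for all $x_i,y_i$: (CC1) $\sum_{\mathrm{cyc}(x_1,x_2,x_3)}\big(\omega(x_1,x_2,x_3)-\rho(\alpha(x_1))\nu(x_2,x_3)+\nu([x_1,x_2],\alpha(x_3))\big)=0$; (CC2) $\sum_{\mathrm{cyc}(x_1,x_2,x_3)}\big(\theta(\alpha(x_1),\alpha(y_1))\nu(x_2,x_3)+\omega([x_1,x_2],\alpha(x_3),\alpha(y_1))\big)=0$; (CC3) $\omega(\alpha(x_1),\alpha(x_2),[y_1,y_2])+D(\alpha(x_1),\alpha(x_2))\nu(y_1,y_2)=\nu([x_1,x_2,y_1],\alpha^2(y_2))+\nu(\alpha^2(y_1),[x_1,x_2,y_2])+\rho(\alpha^2(y_1))\omega(x_1,x_2,y_2)-\rho(\alpha^2(y_2))\omega(x_1,x_2,y_1)$;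 (CC4) $\omega(\alpha^2(x_1),\alpha^2(x_2),[y_1,y_2,y_3])+D(\alpha^2(x_1),\alpha^2(x_2))\omega(y_1,y_2,y_3)=\omega([x_1,x_2,y_1],\alpha^2(y_2),\alpha^2(y_3))+\omega(\alpha^2(y_1),[x_1,x_2,y_2],\alpha^2(y_3))+\omega(\alpha^2(y_1),\alpha^2(y_2),[x_1,x_2,y_3])+\theta(\alpha^2(y_2),\alpha^2(y_3))\omega(x_1,x_2,y_1)-\theta(\alpha^2(y_1),\alpha^2(y_3))\omega(x_1,x_2,y_2)+D(\alpha^2(y_1),\alpha^2(y_2))\omega(x_1,x_2,y_3)$. $B^2(T,V)\times B^3(T,V)$ is the set of $(\nu,\omega)\in C^2\times C^3$ for which there is a linear $f:T\to V$ with $f\circ\alpha=\beta\circ f$, $\nu(x_1,x_2)=\rho(x_1)f(x_2)-\rho(x_2)f(x_1)-f([x_1,x_2])$, $\omega(x_1,x_2,x_3)=\theta(x_2,x_3)f(x_1)-\theta(x_1,x_3)f(x_2)+D(x_1,x_2)f(x_3)-f([x_1,x_2,x_3])$. The (2,3)-cohomology group is $H^2(T,V)\times H^3(T,V)=(Z^2(T,V)\times Z^3(T,V))/(B^2(T,V)\times B^3(T,V))$. *)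

From HB Require Import structures.
From mathcomp Require Import all_boot all_algebra.
Set Implicit Arguments. Unset Strict Implicit. Unset Printing Implicit Defensive.
Import GRing.Theory.
Local Open Scope ring_scope.

Section Linearity.
Variable K : fieldType.

Definition lin1 (A B : lmodType K) (f : A -> B) : Prop :=
  forall (a : K) (x y : A), f (a *: x + y) = a *: f x + f y.

Definition lin2 (A B C : lmodType K) (f : A -> B -> C) : Prop :=
  (forall y, lin1 (fun x => f x y)) /\ (forall x, lin1 (f x)).

Definition lin3 (A B C E : lmodType K) (f : A -> B -> C -> E) : Prop :=
  [/\ forall y z, lin1 (fun x => f x y z),
      forall x z, lin1 (fun y => f x y z) &
      forall x y, lin1 (f x y)].
End Linearity.

Section HLYA.
Variable K : fieldType.

Record HLYA_axioms (T : lmodType K) (al : T -> T) (b2 : T -> T -> T)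
    (b3 : T -> T -> T -> T) : Prop := {
  hly_lin_al : lin1 al;
  hly_lin_b2 : lin2 b2;
  hly_lin_b3 : lin3 b3;
  HLY01 : forall x1 x2, al (b2 x1 x2) = b2 (al x1) (al x2);
  HLY02 : forall x1 x2 x3, al (b3 x1 x2 x3) = b3 (al x1) (al x2) (al x3);
  HLY1 : forall x1 x2, b2 x1 x2 + b2 x2 x1 = 0;
  HLY2 : forall x1 x2 x3, b3 x1 x2 x3 + b3 x2 x1 x3 = 0;
  HLY3 : forall x1 x2 x3,
    (b2 (b2 x1 x2) (al x3) + b3 x1 x2 x3)
    + (b2 (b2 x2 x3) (al x1) + b3 x2 x3 x1)
    + (b2 (b2 x3 x1) (al x2) + b3 x3 x1 x2) = 0;
  HLY4 : forall x1 x2 x3 y1,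
    b3 (b2 x1 x2) (al x3) (al y1) + b3 (b2 x2 x3) (al x1) (al y1)
    + b3 (b2 x3 x1) (al x2) (al y1) = 0;
  HLY5 : forall x1 x2 y1 y2,
    b3 (al x1) (al x2) (b2 y1 y2)
    = b2 (b3 x1 x2 y1) (al (al y2)) + b2 (al (al y1)) (b3 x1 x2 y2);
  HLY6 : forall x1 x2 y1 y2 y3,
    b3 (al (al x1)) (al (al x2)) (b3 y1 y2 y3)
    = b3 (b3 x1 x2 y1) (al (al y2)) (al (al y3))
      + b3 (al (al y1)) (b3 x1 x2 y2) (al (al y3))
      + b3 (al (al y1)) (al (al y2)) (b3 x1 x2 y3)
}.

Definition HLYA_hom (T1 : lmodType K) (al1 : T1 -> T1) (b21 : T1 -> T1 -> T1)
    (b31 : T1 -> T1 -> T1 -> T1)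
    (T2 : lmodType K) (al2 : T2 -> T2) (b22 : T2 -> T2 -> T2)
    (b32 : T2 -> T2 -> T2 -> T2) (f : T1 -> T2) : Prop :=
  [/\ lin1 f,
      forall x, f (al1 x) = al2 (f x),
      forall x y, f (b21 x y) = b22 (f x) (f y) &
      forall x y z, f (b31 x y z) = b32 (f x) (f y) (f z)].

(* Representation (rho, D, theta) of (T, alpha) on the Hom-vector space (V, beta).
   rho : T -> End(V) linear and D, theta : T x T -> End(V) bilinear are encoded
   as bi-/trilinear maps; composition in End(V) is written pointwise in v. *)
Record rep_axioms (T : lmodType K) (al : T -> T) (b2 : T -> T -> T)
    (b3 : T -> T -> T -> T) (V : lmodType K) (beta : V -> V)
    (rho : T -> V -> V) (D theta : T -> T -> V -> V) : Prop := {
  rep_lin_beta : lin1 beta;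
  rep_lin_rho : lin2 rho;
  rep_lin_D : lin3 D;
  rep_lin_theta : lin3 theta;
  HR01 : forall x1 v, rho (al x1) (beta v) = beta (rho x1 v);
  HR02 : forall x1 x2 v, D (al x1) (al x2) (beta v) = beta (D x1 x2 v);
  HR03 : forall x1 x2 v, theta (al x1) (al x2) (beta v) = beta (theta x1 x2 v);
  HR31 : forall x1 x2 v,
    D x1 x2 v - theta x2 x1 v + theta x1 x2 v + rho (b2 x1 x2) (beta v)
    - rho (al x1) (rho x2 v) + rho (al x2) (rho x1 v) = 0;
  HR41 : forall x1 x2 x3 v,
    D (b2 x1 x2) (al x3) v + D (b2 x2 x3) (al x1) v + D (b2 x3 x1) (al x2) v = 0;
  HR42 : forall x1 x2 y1 v,
    theta (b2 x1 x2) (al y1) (beta v)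
    = theta (al x1) (al y1) (rho x2 v) - theta (al x2) (al y1) (rho x1 v);
  HR51 : forall x1 x2 y2 v,
    D (al x1) (al x2) (rho y2 v)
    = rho (al (al y2)) (D x1 x2 v) + rho (b3 x1 x2 y2) (beta (beta v));
  HR52 : forall x1 y1 y2 v,
    theta (al x1) (b2 y1 y2) (beta v)
    = rho (al (al y1)) (theta x1 y2 v) - rho (al (al y2)) (theta x1 y1 v);
  HR61 : forall x1 x2 y1 y2 v,
    D (al (al x1)) (al (al x2)) (theta y1 y2 v)
    = theta (al (al y1)) (al (al y2)) (D x1 x2 v)
      + theta (b3 x1 x2 y1) (al (al y2)) (beta (beta v))
      + theta (al (al y1)) (b3 x1 x2 y2) (beta (beta v));
  HR62 : forall x1 y1 y2 y3 v,
    theta (al (al x1)) (b3 y1 y2 y3) (beta (beta v))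
    = theta (al (al y2)) (al (al y3)) (theta x1 y1 v)
      - theta (al (al y1)) (al (al y3)) (theta x1 y2 v)
      + D (al (al y1)) (al (al y2)) (theta x1 y3 v)
}.

Section Cohomology.
Variables (T : lmodType K) (al : T -> T) (b2 : T -> T -> T)
  (b3 : T -> T -> T -> T) (V : lmodType K) (beta : V -> V)
  (rho : T -> V -> V) (D theta : T -> T -> V -> V).

Definition C2 (nu : T -> T -> V) : Prop :=
  [/\ lin2 nu, forall x1 x2, nu x1 x2 = - nu x2 x1 &
      forall x1 x2, nu (al x1) (al x2) = beta (nu x1 x2)].

Definition C3 (om : T -> T -> T -> V) : Prop :=
  [/\ lin3 om, forall x1 x2 x3, om x1 x2 x3 = - om x2 x1 x3 &
      forall x1 x2 x3, om (al x1) (al x2) (al x3) = beta (om x1 x2 x3)].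

Definition Z23 (nu : T -> T -> V) (om : T -> T -> T -> V) : Prop :=
  C2 nu /\ C3 om /\
  [/\
  forall x1 x2 x3,
    (om x1 x2 x3 - rho (al x1) (nu x2 x3) + nu (b2 x1 x2) (al x3))
    + (om x2 x3 x1 - rho (al x2) (nu x3 x1) + nu (b2 x2 x3) (al x1))
    + (om x3 x1 x2 - rho (al x3) (nu x1 x2) + nu (b2 x3 x1) (al x2)) = 0,
  forall x1 x2 x3 y1,
    (theta (al x1) (al y1) (nu x2 x3) + om (b2 x1 x2) (al x3) (al y1))
    + (theta (al x2) (al y1) (nu x3 x1) + om (b2 x2 x3) (al x1) (al y1))
    + (theta (al x3) (al y1) (nu x1 x2) + om (b2 x3 x1) (al x2) (al y1)) = 0,
  forall x1 x2 y1 y2,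
    om (al x1) (al x2) (b2 y1 y2) + D (al x1) (al x2) (nu y1 y2)
    = nu (b3 x1 x2 y1) (al (al y2)) + nu (al (al y1)) (b3 x1 x2 y2)
      + rho (al (al y1)) (om x1 x2 y2) - rho (al (al y2)) (om x1 x2 y1) &
  forall x1 x2 y1 y2 y3,
    om (al (al x1)) (al (al x2)) (b3 y1 y2 y3)
      + D (al (al x1)) (al (al x2)) (om y1 y2 y3)
    = om (b3 x1 x2 y1) (al (al y2)) (al (al y3))
      + om (al (al y1)) (b3 x1 x2 y2) (al (al y3))
      + om (al (al y1)) (al (al y2)) (b3 x1 x2 y3)
      + theta (al (al y2)) (al (al y3)) (om x1 x2 y1)
      - theta (al (al y1)) (al (al y3)) (om x1 x2 y2)
      + D (al (al y1)) (al (al y2)) (om x1 x2 y3)].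

Definition B23 (nu : T -> T -> V) (om : T -> T -> T -> V) : Prop :=
  C2 nu /\ C3 om /\
  exists f : T -> V, [/\ lin1 f, forall x, f (al x) = beta (f x),
    forall x1 x2, nu x1 x2 = rho x1 (f x2) - rho x2 (f x1) - f (b2 x1 x2) &
    forall x1 x2 x3, om x1 x2 x3 = theta x2 x3 (f x1) - theta x1 x3 (f x2)
                                   + D x1 x2 (f x3) - f (b3 x1 x2 x3)].

Definition cohomologous (c1 c2 : (T -> T -> V) * (T -> T -> T -> V)) : Prop :=
  B23 (fun x y => c1.1 x y - c2.1 x y) (fun x y z => c1.2 x y z - c2.2 x y z).

Record ext := Ext {
  ext_T : lmodType K;
  ext_al : ext_T -> ext_T;
  ext_b2 : ext_T -> ext_T -> ext_T;
  ext_b3 : ext_T -> ext_T -> ext_T -> ext_T;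
  ext_hlya : HLYA_axioms ext_al ext_b2 ext_b3;
  ext_i : V -> ext_T;
  ext_p : ext_T -> T;
  ext_i_lin : lin1 ext_i;
  ext_i_inj : injective ext_i;
  ext_i_comm : forall v, ext_al (ext_i v) = ext_i (beta v);
  ext_p_hom : HLYA_hom ext_al ext_b2 ext_b3 al b2 b3 ext_p;
  ext_p_surj : forall x, exists y, ext_p y = x;
  ext_exact : forall y, (exists v, ext_i v = y) <-> ext_p y = 0;
  ext_abelian : forall (v1 v2 : V) (z : ext_T),
    [/\ ext_b2 (ext_i v1) (ext_i v2) = 0,
        ext_b3 (ext_i v1) (ext_i v2) z = 0,
        ext_b3 (ext_i v1) z (ext_i v2) = 0 &
        ext_b3 z (ext_i v1) (ext_i v2) = 0];
  ext_induces : exists sigma : T -> ext_T,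
    [/\ lin1 sigma,
        forall x, ext_p (sigma x) = x &
        forall x, ext_al (sigma x) = sigma (al x)] /\
    [/\ forall x v, ext_i (rho x v) = ext_b2 (sigma x) (ext_i v),
        forall x1 x2 v, ext_i (D x1 x2 v) = ext_b3 (sigma x1) (sigma x2) (ext_i v) &
        forall x1 x2 v, ext_i (theta x1 x2 v) = ext_b3 (ext_i v) (sigma x1) (sigma x2)]
}.

Definition ext_equiv (E1 E2 : ext) : Prop :=
  exists F : ext_T E1 -> ext_T E2,
    [/\ HLYA_hom (@ext_al E1) (@ext_b2 E1) (@ext_b3 E1)
                 (@ext_al E2) (@ext_b2 E2) (@ext_b3 E2) F,
        forall v, F (@ext_i E1 v) = @ext_i E2 v &
        forall y, @ext_p E2 (F y) = @ext_p E1 y].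

End Cohomology.
End HLYA.

From HB Require Import structures.
From mathcomp Require Import all_boot all_algebra.
From Stdlib Require Import ClassicalEpsilon.
Set Implicit Arguments. Unset Strict Implicit. Unset Printing Implicit Defensive.
Import GRing.Theory.
Local Open Scope ring_scope.

(* Fix a section [s] of an abelian extension [p : E -> T], compatible with the
   twisting maps and inducing (rho, D, theta).  Then [(x, u) |-> s x + u]
   identifies [E] with [T * V], whose brackets become
     [(x,u), (y,v)]         = ([x,y], nu(x,y) + rho(x)v - rho(y)u),
     [(x,u), (y,v), (z,w)]  = ([x,y,z], om(x,y,z) + D(x,y)w - theta(x,z)v + theta(y,z)u),
   where (nu, om) measure how far [s] is from preserving the brackets.  The
   Hom-Lie-Yamaguti axioms for these brackets are equivalent to (nu, om) being a
   (2,3)-cocycle, so every cocycle arises, and every extension is equivalent to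
   the twisted product built on its cocycle.  An equivalence of two twisted
   products fixes [V] and covers the identity of [T], hence is
   [(x, u) |-> (x, u + f x)]; it preserves the brackets exactly when the two
   cocycles differ by the coboundary of [f]. *)

(** * Identities in abelian groups *)

Inductive zterm := ZVar of nat | ZZero | ZAdd of zterm & zterm | ZOpp of zterm.

Section ZmodNormalForm.
Variable M : zmodType.
Implicit Types (env : seq M) (c : seq int) (t : zterm).

Fixpoint zeval env t : M :=
  match t with
  | ZVar n => nth 0 env n
  | ZZero => 0
  | ZAdd t1 t2 => zeval env t1 + zeval env t2
  | ZOpp t1 => - zeval env t1
  end.

Fixpoint zcoef_eval env c : M :=
  if c is k :: c' then head 0 env *~ k + zcoef_eval (behead env) c' else 0.

Fixpoint zcoef_add c1 c2 : seq int :=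
  match c1, c2 with
  | [::], _ => c2
  | _, [::] => c1
  | k1 :: c1', k2 :: c2' => (k1 + k2) :: zcoef_add c1' c2'
  end.

Fixpoint zcoef t : seq int :=
  match t with
  | ZVar n => rcons (nseq n 0) 1
  | ZZero => [::]
  | ZAdd t1 t2 => zcoef_add (zcoef t1) (zcoef t2)
  | ZOpp t1 => map -%R (zcoef t1)
  end.

Lemma zcoef_evalD env c1 c2 :
  zcoef_eval env (zcoef_add c1 c2) = zcoef_eval env c1 + zcoef_eval env c2.
Proof.
elim: c1 c2 env => [|k1 c1 IH] [|k2 c2] env /=; rewrite ?add0r ?addr0 //.
by rewrite IH mulrzDr addrACA.
Qed.

Lemma zcoef_evalN env c : zcoef_eval env (map -%R c) = - zcoef_eval env c.
Proof.
elim: c env => [|k c IH] env /=; first by rewrite oppr0.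
by rewrite IH opprD -mulrNz.
Qed.

Lemma zcoef_eval_var env n : zcoef_eval env (rcons (nseq n 0) 1) = nth 0 env n.
Proof.
elim: n env => [|n IH] [|x env] /=; rewrite ?mulr1z ?addr0 ?mulr0z ?add0r //.
by rewrite IH; case: n {IH}.
Qed.

Lemma zevalE env t : zeval env t = zcoef_eval env (zcoef t).
Proof.
elim: t env => [n||t1 IH1 t2 IH2|t1 IH1] env /=.
- by rewrite zcoef_eval_var.
- by [].
- by rewrite zcoef_evalD IH1 IH2.
- by rewrite zcoef_evalN IH1.
Qed.

Lemma zcoef_eval0 env c : all (eq_op^~ 0) c -> zcoef_eval env c = 0.
Proof.
by elim: c env => [|k c IH] env //= /andP[/eqP -> /IH ->]; rewrite mulr0z addr0.
Qed.

Lemma zeval_eq env t1 t2 :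
  all (eq_op^~ 0) (zcoef (ZAdd t1 (ZOpp t2))) -> zeval env t1 = zeval env t2.
Proof.
move=> /(zcoef_eval0 env); rewrite -zevalE /= => /eqP.
by rewrite subr_eq0 => /eqP.
Qed.

End ZmodNormalForm.

Lemma eq_by_diff (M : zmodType) (l r a b : M) : l = r -> a - b = l - r -> a = b.
Proof. by move=> -> /eqP; rewrite subrr subr_eq0 => /eqP. Qed.

Lemma eq_by_diffN (M : zmodType) (l r a b : M) : l = r -> a - b = r - l -> a = b.
Proof. by move=> -> /eqP; rewrite subrr subr_eq0 => /eqP. Qed.

Ltac zindex x l :=
  lazymatch l with
  | cons x _ => constr:(0%N)
  | cons _ ?l' => let n := zindex x l' in constr:(S n)
  end.

Ltac zatoms t l :=
  lazymatch t with
  | (?a + ?b)%R => let l' := zatoms a l in zatoms b l'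
  | (- ?a)%R => zatoms a l
  | 0%R => l
  | _ => match constr:(tt) with
         | _ => let _ := zindex t l in l
         | _ => constr:(cons t l)
         end
  end.

Ltac zreify t l :=
  lazymatch t with
  | (?a + ?b)%R => let ea := zreify a l in let eb := zreify b l in constr:(ZAdd ea eb)
  | (- ?a)%R => let ea := zreify a l in constr:(ZOpp ea)
  | 0%R => constr:(ZZero)
  | _ => let n := zindex t l in constr:(ZVar n)
  end.

Ltac zmod_eq :=
  lazymatch goal with |- @eq ?M ?A ?B =>
    let l := zatoms A (@nil M) in let l := zatoms B l in
    let ea := zreify A l in let eb := zreify B l in
    change (zeval l ea = zeval l eb); apply: zeval_eq; vm_compute; reflexivity
  end.

(* Closes [e1 -> ... -> en -> a = b] when [a - b] is a signed sum of the
   differences of the sides of the [ei]; the signs are found by search. *)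
Ltac zmod_combine :=
  lazymatch goal with
  | |- _ = _ -> _ = _ -> _ =>
      let h1 := fresh "h" in let h2 := fresh "h" in move=> h1 h2;
      first [ move: (congr2 +%R h1 h2); clear h1 h2; zmod_combine
            | move: (congr2 +%R h1 (congr1 -%R h2)); clear h1 h2; zmod_combine ]
  | |- _ = _ -> _ =>
      let h := fresh "h" in move=> h;
      first [ apply: (eq_by_diff h); zmod_eq | apply: (eq_by_diffN h); zmod_eq ]
  end.

(** * Multilinear maps and homomorphisms *)

Section Multilinear.
Variable K : fieldType.

Section Linear1.
Variables (A B : lmodType K) (f : A -> B).
Hypothesis hf : lin1 f.

Lemma lin1D x y : f (x + y) = f x + f y.
Proof. by have := hf 1 x y; rewrite !scale1r. Qed.

Lemma lin10 : f 0 = 0.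
Proof. by apply: (@addrI _ (f 0)); rewrite -lin1D !addr0. Qed.

Lemma lin1N x : f (- x) = - f x.
Proof. by have := hf (-1) x 0; rewrite !addr0 lin10 addr0 !scaleN1r. Qed.

Lemma lin1Z a x : f (a *: x) = a *: f x.
Proof. by have := hf a x 0; rewrite !addr0 lin10 addr0. Qed.

End Linear1.

Definition lin1E (A B : lmodType K) (f : A -> B) (hf : lin1 f) :=
  (lin1D hf, lin1N hf, lin10 hf, lin1Z hf).

Section Linear2.
Variables (A B C : lmodType K) (f : A -> B -> C).
Hypothesis hf : lin2 f.

Lemma lin2Dl x x' y : f (x + x') y = f x y + f x' y.
Proof. exact: lin1D (hf.1 y) _ _. Qed.
Lemma lin2Nl x y : f (- x) y = - f x y. Proof. exact: lin1N (hf.1 y) _. Qed.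
Lemma lin20l y : f 0 y = 0. Proof. exact: lin10 (hf.1 y). Qed.
Lemma lin2Zl a x y : f (a *: x) y = a *: f x y. Proof. exact: lin1Z (hf.1 y) _ _. Qed.
Lemma lin2Dr x y y' : f x (y + y') = f x y + f x y'.
Proof. exact: lin1D (hf.2 x) _ _. Qed.
Lemma lin2Nr x y : f x (- y) = - f x y. Proof. exact: lin1N (hf.2 x) _. Qed.
Lemma lin20r x : f x 0 = 0. Proof. exact: lin10 (hf.2 x). Qed.
Lemma lin2Zr a x y : f x (a *: y) = a *: f x y. Proof. exact: lin1Z (hf.2 x) _ _. Qed.

End Linear2.

Definition lin2E (A B C : lmodType K) (f : A -> B -> C) (hf : lin2 f) :=
  (lin2Dl hf, lin2Nl hf, lin20l hf, lin2Zl hf,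
   lin2Dr hf, lin2Nr hf, lin20r hf, lin2Zr hf).

Section Linear3.
Variables (A B C E : lmodType K) (f : A -> B -> C -> E).
Hypothesis hf : lin3 f.

Lemma lin3_1 y z : lin1 (fun x => f x y z). Proof. by case: hf. Qed.
Lemma lin3_2 x z : lin1 (fun y => f x y z). Proof. by case: hf. Qed.
Lemma lin3_3 x y : lin1 (f x y). Proof. by case: hf. Qed.

Lemma lin3D1 x x' y z : f (x + x') y z = f x y z + f x' y z.
Proof. exact: lin1D (lin3_1 y z) _ _. Qed.
Lemma lin3N1 x y z : f (- x) y z = - f x y z. Proof. exact: lin1N (lin3_1 y z) _. Qed.
Lemma lin301 y z : f 0 y z = 0. Proof. exact: lin10 (lin3_1 y z). Qed.
Lemma lin3Z1 a x y z : f (a *: x) y z = a *: f x y z.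
Proof. exact: lin1Z (lin3_1 y z) _ _. Qed.
Lemma lin3D2 x y y' z : f x (y + y') z = f x y z + f x y' z.
Proof. exact: lin1D (lin3_2 x z) _ _. Qed.
Lemma lin3N2 x y z : f x (- y) z = - f x y z. Proof. exact: lin1N (lin3_2 x z) _. Qed.
Lemma lin302 x z : f x 0 z = 0. Proof. exact: lin10 (lin3_2 x z). Qed.
Lemma lin3Z2 a x y z : f x (a *: y) z = a *: f x y z.
Proof. exact: lin1Z (lin3_2 x z) _ _. Qed.
Lemma lin3D3 x y z z' : f x y (z + z') = f x y z + f x y z'.
Proof. exact: lin1D (lin3_3 x y) _ _. Qed.
Lemma lin3N3 x y z : f x y (- z) = - f x y z. Proof. exact: lin1N (lin3_3 x y) _. Qed.
Lemma lin303 x y : f x y 0 = 0. Proof. exact: lin10 (lin3_3 x y). Qed.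
Lemma lin3Z3 a x y z : f x y (a *: z) = a *: f x y z.
Proof. exact: lin1Z (lin3_3 x y) _ _. Qed.

End Linear3.

Definition lin3E (A B C E : lmodType K) (f : A -> B -> C -> E) (hf : lin3 f) :=
  (lin3D1 hf, lin3N1 hf, lin301 hf, lin3Z1 hf, lin3D2 hf, lin3N2 hf,
   lin302 hf, lin3Z2 hf, lin3D3 hf, lin3N3 hf, lin303 hf, lin3Z3 hf).

End Multilinear.

Section HLYAHomomorphisms.
Variables (K : fieldType) (A B C : lmodType K).
Variables (alA : A -> A) (b2A : A -> A -> A) (b3A : A -> A -> A -> A).
Variables (alB : B -> B) (b2B : B -> B -> B) (b3B : B -> B -> B -> B).
Variables (alC : C -> C) (b2C : C -> C -> C) (b3C : C -> C -> C -> C).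

Lemma HLYA_hom_comp (f : A -> B) (g : B -> C) :
  HLYA_hom alA b2A b3A alB b2B b3B f -> HLYA_hom alB b2B b3B alC b2C b3C g ->
  HLYA_hom alA b2A b3A alC b2C b3C (g \o f).
Proof.
move=> [fl fal fb2 fb3] [gl gal gb2 gb3]; split=> [a x y|x|x y|x y z] /=.
- by rewrite fl gl.
- by rewrite fal gal.
- by rewrite fb2 gb2.
- by rewrite fb3 gb3.
Qed.

Section InjectiveHom.
Variable f : A -> B.
Hypotheses (f_inj : injective f) (f_hom : HLYA_hom alA b2A b3A alB b2B b3B f).

Lemma HLYA_hom_inv (g : B -> A) : cancel g f -> HLYA_hom alB b2B b3B alA b2A b3A g.
Proof.
case: f_hom => [fl fal fb2 fb3] gK; split=> [a x y|x|x y|x y z]; apply: f_inj.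
- by rewrite fl !gK.
- by rewrite fal !gK.
- by rewrite fb2 !gK.
- by rewrite fb3 !gK.
Qed.

Lemma HLYA_axioms_inj_hom : HLYA_axioms alB b2B b3B -> HLYA_axioms alA b2A b3A.
Proof.
case: f_hom => [fl fal fb2 fb3] hB.
have fE := lin1E fl; have alE := lin1E (hly_lin_al hB).
have b2E := lin2E (hly_lin_b2 hB); have b3E := lin3E (hly_lin_b3 hB).
split.
- by move=> a x y; apply: f_inj; rewrite !(fE, fal) ?alE.
- by split=> [y a x1 x2|x a y1 y2]; apply: f_inj; rewrite !(fE, fb2) ?b2E.
- by split=> [y z a x1 x2|x z a y1 y2|x y a z1 z2]; apply: f_inj;
    rewrite !(fE, fb3) ?b3E.
- by move=> x y; apply: f_inj; rewrite !(fal, fb2) (HLY01 hB).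
- by move=> x y z; apply: f_inj; rewrite !(fal, fb3) (HLY02 hB).
- by move=> x y; apply: f_inj; rewrite !(fE, fb2) (HLY1 hB).
- by move=> x y z; apply: f_inj; rewrite !(fE, fb3) (HLY2 hB).
- by move=> x y z; apply: f_inj; rewrite !(fE, fal, fb2, fb3) (HLY3 hB).
- by move=> x y z w; apply: f_inj; rewrite !(fE, fal, fb2, fb3) (HLY4 hB).
- by move=> x y z w; apply: f_inj; rewrite !(fE, fal, fb2, fb3) (HLY5 hB).
- by move=> x y z w t; apply: f_inj; rewrite !(fE, fal, fb2, fb3) (HLY6 hB).
Qed.

End InjectiveHom.
End HLYAHomomorphisms.

Lemma ext_equiv_trans (K : fieldType) (T : lmodType K) (al : T -> T)
    (b2 : T -> T -> T) (b3 : T -> T -> T -> T) (V : lmodType K) (beta : V -> V)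
    (rho : T -> V -> V) (D theta : T -> T -> V -> V)
    (E1 E2 E3 : ext al b2 b3 beta rho D theta) :
  ext_equiv E1 E2 -> ext_equiv E2 E3 -> ext_equiv E1 E3.
Proof.
move=> [F [hF Fi Fp]] [G [hG Gi Gp]]; exists (G \o F); split.
- exact: HLYA_hom_comp hF hG.
- by move=> v /=; rewrite Fi Gi.
- by move=> y /=; rewrite Gp Fp.
Qed.

(** * Twisted products and abelian extensions *)

Section Classification.
Variables (K : fieldType) (T : lmodType K) (al : T -> T) (b2 : T -> T -> T)
  (b3 : T -> T -> T -> T) (V : lmodType K) (beta : V -> V) (rho : T -> V -> V)
  (D theta : T -> T -> V -> V).
Hypotheses (hT : HLYA_axioms al b2 b3) (hR : rep_axioms al b2 b3 beta rho D theta).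

Local Notation Z23 := (Z23 al b2 b3 beta rho D theta).
Local Notation cohomologous := (cohomologous al b2 b3 beta rho D theta).
Local Notation ext := (ext al b2 b3 beta rho D theta).
Local Notation alE := (lin1E (hly_lin_al hT)).
Local Notation b2E := (lin2E (hly_lin_b2 hT)).
Local Notation b3E := (lin3E (hly_lin_b3 hT)).
Local Notation betaE := (lin1E (rep_lin_beta hR)).
Local Notation rhoE := (lin2E (rep_lin_rho hR)).
Local Notation DE := (lin3E (rep_lin_D hR)).
Local Notation thetaE := (lin3E (rep_lin_theta hR)).

Lemma D_rho_theta x y v : D x y v = theta y x v - theta x y v
  - rho (b2 x y) (beta v) + rho (al x) (rho y v) - rho (al y) (rho x v).
Proof. by move: (HR31 hR x y v); zmod_combine. Qed.

Lemma D_antisym x y v : D x y v = - D y x v.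
Proof.
have b2_antisym : b2 y x = - b2 x y.
  by apply/eqP; rewrite -addr_eq0 addrC (HLY1 hT).
by rewrite !D_rho_theta b2_antisym rhoE; zmod_eq.
Qed.

(* The analogue of (HR61) with [theta] replaced by [D]: expand the inner [D]
   through (HR31) and use (HR61), (HR51) and (HLY5). *)
Lemma D_D x1 x2 y1 y2 v :
  D (al (al x1)) (al (al x2)) (D y1 y2 v)
  = D (al (al y1)) (al (al y2)) (D x1 x2 v)
    + D (b3 x1 x2 y1) (al (al y2)) (beta (beta v))
    + D (al (al y1)) (b3 x1 x2 y2) (beta (beta v)).
Proof.
have beta2_rho y u : beta (beta (rho y u)) = rho (al (al y)) (beta (beta u)).
  by rewrite -!(HR01 hR).
rewrite (D_rho_theta y1 y2 v) !DE (HR61 hR x1 x2 y2 y1) (HR61 hR x1 x2 y1 y2).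
rewrite (HR51 hR (al x1) (al x2) (b2 y1 y2)) (HR02 hR) !(HLY01 hT) (HLY5 hT) !rhoE.
rewrite (HR51 hR (al x1) (al x2) (al y1)) (HR51 hR (al x1) (al x2) (al y2)).
rewrite (HR51 hR x1 x2 y2) (HR51 hR x1 x2 y1) !rhoE !beta2_rho.
rewrite (D_rho_theta (al (al y1)) (al (al y2)) (D x1 x2 v)).
rewrite (D_rho_theta (b3 x1 x2 y1) (al (al y2)) (beta (beta v))).
rewrite (D_rho_theta (al (al y1)) (b3 x1 x2 y2) (beta (beta v))).
rewrite ?(HLY01 hT) ?(HLY02 hT).
zmod_eq.
Qed.

Definition twist_al (q : T * V) : T * V := (al q.1, beta q.2).

Section Twist.
Variables (nu : T -> T -> V) (om : T -> T -> T -> V).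

Definition twist_b2 (q r : T * V) : T * V :=
  (b2 q.1 r.1, nu q.1 r.1 + rho q.1 r.2 - rho r.1 q.2).

Definition twist_b3 (q r t : T * V) : T * V :=
  (b3 q.1 r.1 t.1,
   om q.1 r.1 t.1 + D q.1 r.1 t.2 - theta q.1 t.1 r.2 + theta r.1 t.1 q.2).

Lemma pairZD0 a (x y : T) : ((a *: x + y, 0) : T * V) = a *: (x, 0) + (y, 0).
Proof. by apply: injective_projections; rewrite /= ?scaler0 ?addr0. Qed.

Lemma twist_HLYA_axioms : Z23 nu om -> HLYA_axioms twist_al twist_b2 twist_b3.
Proof.
move=> [[nul nu_anti nu_al] [[oml om_anti om_al] [CC1 CC2 CC3 CC4]]].
have nuE := lin2E nul; have omE := lin3E oml.
split; rewrite /twist_al /twist_b2 /twist_b3.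
- by move=> a [x u] [y v]; apply: injective_projections; rewrite /= ?alE ?betaE.
- split=> [[y v] a [x1 u1] [x2 u2]|[x v] a [y1 v1] [y2 v2]];
    apply: injective_projections; rewrite /= ?b2E ?nuE ?rhoE ?scalerDr ?scalerN //;
    zmod_eq.
- split=> [[y v] [z w] a [x1 u1] [x2 u2]|[x u] [z w] a [y1 v1] [y2 v2]
          |[x u] [y v] a [z1 w1] [z2 w2]];
    apply: injective_projections; rewrite /= ?b3E ?omE ?DE ?thetaE ?scalerDr ?scalerN //;
    zmod_eq.
- move=> [x u] [y v].
  apply: injective_projections => /=; first exact: (HLY01 hT).
  by rewrite !betaE nu_al !(HR01 hR).
- move=> [x u] [y v] [z w].
  apply: injective_projections => /=; first exact: (HLY02 hT).
  by rewrite !betaE om_al (HR02 hR) !(HR03 hR).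
- move=> [x u] [y v].
  apply: injective_projections => /=; first exact: (HLY1 hT).
  by rewrite (nu_anti x y); zmod_eq.
- move=> [x u] [y v] [z w].
  apply: injective_projections => /=; first exact: (HLY2 hT).
  by rewrite (om_anti x y z) (D_antisym x y w); zmod_eq.
- move=> [x1 u1] [x2 u2] [x3 u3].
  apply: injective_projections => /=; first exact: (HLY3 hT).
  rewrite !rhoE.
  move: (CC1 x1 x2 x3) (HR31 hR x1 x2 u3) (HR31 hR x2 x3 u1) (HR31 hR x3 x1 u2).
  by zmod_combine.
- move=> [x1 u1] [x2 u2] [x3 u3] [y w].
  apply: injective_projections => /=; first exact: (HLY4 hT).
  rewrite !thetaE.
  move: (CC2 x1 x2 x3 y) (HR41 hR x1 x2 x3 (beta w)) (HR42 hR x1 x2 y u3)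
    (HR42 hR x2 x3 y u1) (HR42 hR x3 x1 y u2).
  by zmod_combine.
- move=> [x1 u1] [x2 u2] [y1 v1] [y2 v2].
  apply: injective_projections => /=; first exact: (HLY5 hT).
  rewrite ?DE ?rhoE ?betaE.
  move: (CC3 x1 x2 y1 y2) (HR51 hR x1 x2 y1 v2) (HR51 hR x1 x2 y2 v1)
    (HR52 hR x2 y1 y2 u1) (HR52 hR x1 y1 y2 u2).
  by zmod_combine.
- move=> [x1 u1] [x2 u2] [y1 v1] [y2 v2] [y3 v3].
  apply: injective_projections => /=; first exact: (HLY6 hT).
  rewrite ?DE ?thetaE ?betaE.
  move: (CC4 x1 x2 y1 y2 y3) (HR62 hR x2 y1 y2 y3 u1) (HR62 hR x1 y1 y2 y3 u2)
    (HR61 hR x1 x2 y2 y3 v1) (HR61 hR x1 x2 y1 y3 v2) (D_D x1 x2 y1 y2 v3).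
  by zmod_combine.
Qed.

(* [nu] and [om] are the [V]-components of the brackets of the [(x, 0)]. *)
Lemma twist_Z23 : HLYA_axioms twist_al twist_b2 twist_b3 -> Z23 nu om.
Proof.
move=> htw; have l2 := hly_lin_b2 htw; have l3 := hly_lin_b3 htw.
have nuT x y : nu x y = (twist_b2 (x, 0) (y, 0)).2.
  by rewrite /= !rhoE subr0 addr0.
have omT x y z : om x y z = (twist_b3 (x, 0) (y, 0) (z, 0)).2.
  by rewrite /= !DE !thetaE subr0 !addr0.
split; [|split]; [split|split|split].
- by split=> [y a x1 x2|x a y1 y2]; rewrite !nuT pairZD0 ?(lin2Dl l2, lin2Zl l2)
    ?(lin2Dr l2, lin2Zr l2).
- by move=> x y; move: (congr1 snd (HLY1 htw (x, 0) (y, 0))); rewrite /= ?rhoE;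
    zmod_combine.
- by move=> x y; move: (congr1 snd (HLY01 htw (x, 0) (y, 0)));
    rewrite /= ?(betaE, rhoE); zmod_combine.
- by split=> [y z a x1 x2|x z a y1 y2|x y a z1 z2]; rewrite !omT pairZD0
    ?(lin3D1 l3, lin3Z1 l3) ?(lin3D2 l3, lin3Z2 l3) ?(lin3D3 l3, lin3Z3 l3).
- by move=> x y z; move: (congr1 snd (HLY2 htw (x, 0) (y, 0) (z, 0)));
    rewrite /= ?(DE, thetaE); zmod_combine.
- by move=> x y z; move: (congr1 snd (HLY02 htw (x, 0) (y, 0) (z, 0)));
    rewrite /= ?(betaE, DE, thetaE); zmod_combine.
- by move=> x1 x2 x3; move: (congr1 snd (HLY3 htw (x1, 0) (x2, 0) (x3, 0)));
    rewrite /= ?(betaE, rhoE, DE, thetaE); zmod_combine.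
- by move=> x1 x2 x3 y; move: (congr1 snd (HLY4 htw (x1, 0) (x2, 0) (x3, 0) (y, 0)));
    rewrite /= ?(betaE, rhoE, DE, thetaE); zmod_combine.
- by move=> x1 x2 y1 y2; move: (congr1 snd (HLY5 htw (x1, 0) (x2, 0) (y1, 0) (y2, 0)));
    rewrite /= ?(betaE, rhoE, DE, thetaE); zmod_combine.
- by move=> x1 x2 y1 y2 y3;
    move: (congr1 snd (HLY6 htw (x1, 0) (x2, 0) (y1, 0) (y2, 0) (y3, 0)));
    rewrite /= ?(betaE, rhoE, DE, thetaE); zmod_combine.
Qed.

End Twist.

Section TwistExtension.
Variables (nu : T -> T -> V) (om : T -> T -> T -> V).
Hypothesis hZ : Z23 nu om.

Definition twist_i (u : V) : T * V := (0, u).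

Definition twist_sec (x : T) : T * V := (x, 0).

Lemma twist_i_lin : lin1 twist_i.
Proof. by move=> a u v; apply: injective_projections; rewrite /= ?scaler0 ?addr0. Qed.

Lemma twist_i_inj : injective twist_i.
Proof. by move=> u v /(congr1 snd). Qed.

Lemma twist_i_al u : twist_al (twist_i u) = twist_i (beta u).
Proof. by rewrite /twist_al /= alE. Qed.

Lemma fst_twist_hom : HLYA_hom twist_al (twist_b2 nu) (twist_b3 om) al b2 b3 fst.
Proof. by []. Qed.

Lemma fst_twist_surj x : exists q : T * V, q.1 = x.
Proof. by exists (x, 0). Qed.

Lemma twist_exact q : (exists u, twist_i u = q) <-> q.1 = 0.
Proof.
split=> [[u <-] //|q1]; exists q.2.
by apply: injective_projections.
Qed.

Lemma twist_abelian u v q :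
  [/\ twist_b2 nu (twist_i u) (twist_i v) = 0,
      twist_b3 om (twist_i u) (twist_i v) q = 0,
      twist_b3 om (twist_i u) q (twist_i v) = 0 &
      twist_b3 om q (twist_i u) (twist_i v) = 0].
Proof.
have [[nul _ _] [[oml _ _] _]] := hZ.
have nuE := lin2E nul; have omE := lin3E oml.
by split; apply: injective_projections;
  rewrite /= ?(b2E, b3E, nuE, omE, rhoE, DE, thetaE); zmod_eq.
Qed.

Lemma twist_sec_induces :
  [/\ lin1 twist_sec, forall x, (twist_sec x).1 = x &
      forall x, twist_al (twist_sec x) = twist_sec (al x)] /\
  [/\ forall x v, twist_i (rho x v) = twist_b2 nu (twist_sec x) (twist_i v),
      forall x1 x2 v,
        twist_i (D x1 x2 v) = twist_b3 om (twist_sec x1) (twist_sec x2) (twist_i v) &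
      forall x1 x2 v,
        twist_i (theta x1 x2 v) = twist_b3 om (twist_i v) (twist_sec x1) (twist_sec x2)].
Proof.
have [[nul _ _] [[oml _ _] _]] := hZ.
have nuE := lin2E nul; have omE := lin3E oml.
split; [split=> [a x y|x|x] | split=> [x v|x1 x2 v|x1 x2 v]] => //;
  apply: injective_projections;
  rewrite /= ?(b2E, b3E, nuE, omE, betaE, rhoE, DE, thetaE) ?scaler0 ?addr0 //;
  zmod_eq.
Qed.

Definition twist_ext : ext :=
  Ext (twist_HLYA_axioms hZ) twist_i_lin twist_i_inj twist_i_al fst_twist_hom
    fst_twist_surj twist_exact twist_abelian (ex_intro _ twist_sec twist_sec_induces).

End TwistExtension.

Lemma C2_sub nu1 nu2 : C2 al beta nu1 -> C2 al beta nu2 ->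
  C2 al beta (fun x y => nu1 x y - nu2 x y).
Proof.
move=> [l1 anti1 al1] [l2 anti2 al2]; have nu1E := lin2E l1; have nu2E := lin2E l2.
split=> [|x y|x y] /=.
- by split=> [y a x1 x2|x a y1 y2] /=; rewrite ?nu1E ?nu2E scalerBr; zmod_eq.
- by rewrite anti1 anti2; zmod_eq.
- by rewrite al1 al2 !betaE.
Qed.

Lemma C3_sub om1 om2 : C3 al beta om1 -> C3 al beta om2 ->
  C3 al beta (fun x y z => om1 x y z - om2 x y z).
Proof.
move=> [l1 anti1 al1] [l2 anti2 al2]; have om1E := lin3E l1; have om2E := lin3E l2.
split=> [|x y z|x y z] /=.
- by split=> [y z a x1 x2|x z a y1 y2|x y a z1 z2] /=;
    rewrite ?om1E ?om2E scalerBr; zmod_eq.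
- by rewrite anti1 anti2; zmod_eq.
- by rewrite al1 al2 !betaE.
Qed.

Section TwistEquivalence.
Variables (nu1 nu2 : T -> T -> V) (om1 om2 : T -> T -> T -> V).
Hypotheses (hZ1 : Z23 nu1 om1) (hZ2 : Z23 nu2 om2).

Lemma twist_ext_equiv_cohomologous :
  ext_equiv (twist_ext hZ1) (twist_ext hZ2) -> cohomologous (nu1, om1) (nu2, om2).
Proof.
case=> G [[Gl Gal Gb2 Gb3] /= G_i G_fst]; have GE := lin1E Gl.
pose f x := (G (x, 0)).2.
have G_x0 x : G (x, 0) = (x, f x) by apply: injective_projections => //; apply: G_fst.
have G_xu x u : G (x, u) = (x, f x + u).
  have -> : (x, u) = (x, 0) + twist_i u.
    by apply: injective_projections; rewrite /= ?addr0 ?add0r.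
  by rewrite GE G_x0 G_i; apply: injective_projections; rewrite /= ?addr0.
have [[C21 [C31 _]] [C22 [C32 _]]] := (hZ1, hZ2).
split; [exact: C2_sub | split; [exact: C3_sub | exists f; split]].
- by move=> a x y; rewrite /f pairZD0 !GE.
- by move=> x; move: (congr1 snd (Gal (x, 0))); rewrite /= /twist_al /= betaE !G_x0.
- move=> x y /=; move: (congr1 snd (Gb2 (x, 0) (y, 0))).
  by rewrite /= !G_x0 G_xu /= ?rhoE; zmod_combine.
- move=> x y z /=; move: (congr1 snd (Gb3 (x, 0) (y, 0) (z, 0))).
  by rewrite /= !G_x0 G_xu /= ?(DE, thetaE); zmod_combine.
Qed.

Lemma cohomologous_twist_ext_equiv :
  cohomologous (nu1, om1) (nu2, om2) -> ext_equiv (twist_ext hZ1) (twist_ext hZ2).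
Proof.
move=> [_ [_ [f [fl f_al f_nu f_om]]]]; have fE := lin1E fl.
exists (fun q => (q.1, q.2 + f q.1)); split=> [|u|q] //=; last by rewrite fE addr0.
split=> [a [x u] [y v]|[x u]|[x u] [y v]|[x u] [y v] [z w]];
  apply: injective_projections => //=.
- by rewrite !fE scalerDr; zmod_eq.
- by rewrite f_al betaE.
- by move: (f_nu x y); rewrite /= ?rhoE; zmod_combine.
- by move: (f_om x y z); rewrite /= ?(DE, thetaE); zmod_combine.
Qed.

End TwistEquivalence.

Section ExtensionSection.
Variable E : ext.

Definition is_section (s : T -> ext_T E) : Prop :=
  [/\ lin1 s, forall x, ext_p (s x) = x & forall x, ext_al (s x) = s (al x)] /\
  [/\ forall x v, ext_i E (rho x v) = ext_b2 (s x) (ext_i E v),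
      forall x1 x2 v, ext_i E (D x1 x2 v) = ext_b3 (s x1) (s x2) (ext_i E v) &
      forall x1 x2 v, ext_i E (theta x1 x2 v) = ext_b3 (ext_i E v) (s x1) (s x2)].

Local Notation p := (ext_p (e:=E)).
Local Notation i := (ext_i E).
Local Notation ext_alE := (lin1E (hly_lin_al (ext_hlya E))).
Local Notation ext_b2E := (lin2E (hly_lin_b2 (ext_hlya E))).
Local Notation ext_b3E := (lin3E (hly_lin_b3 (ext_hlya E))).
Local Notation iE := (lin1E (ext_i_lin E)).

Lemma ext_p_lin : lin1 p. Proof. by case: (ext_p_hom E). Qed.
Local Notation pE := (lin1E ext_p_lin).

Lemma ext_p_b2 y z : p (ext_b2 y z) = b2 (p y) (p z).
Proof. by case: (ext_p_hom E). Qed.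

Lemma ext_p_b3 y z t : p (ext_b3 y z t) = b3 (p y) (p z) (p t).
Proof. by case: (ext_p_hom E). Qed.

Lemma ext_p_i v : p (i v) = 0.
Proof. by apply/ext_exact; exists v. Qed.

(* The inverse of [i] on the kernel of [p] (junk elsewhere). *)
Definition i_inv (y : ext_T E) : V := epsilon (inhabits 0) (fun v => i v = y).

Lemma i_invK y : p y = 0 -> i (i_inv y) = y.
Proof. by move/ext_exact => y_im; apply: (epsilon_spec (inhabits 0) _ y_im). Qed.

Lemma ext_b2_ii u v : ext_b2 (i u) (i v) = 0.
Proof. by case: (ext_abelian (e:=E) u v 0). Qed.

Lemma ext_b3_iiz u v z : ext_b3 (i u) (i v) z = 0.
Proof. by case: (ext_abelian u v z). Qed.

Lemma ext_b3_izi u v z : ext_b3 (i u) z (i v) = 0.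
Proof. by case: (ext_abelian u v z). Qed.

Lemma ext_b3_zii u v z : ext_b3 z (i u) (i v) = 0.
Proof. by case: (ext_abelian u v z). Qed.

Variable s : T -> ext_T E.
Hypothesis hs : is_section s.

Lemma sec_lin : lin1 s. Proof. by case: hs => [[]]. Qed.
Local Notation sE := (lin1E sec_lin).

Lemma sec_p x : p (s x) = x. Proof. by case: hs => [[]]. Qed.
Lemma sec_al x : ext_al (s x) = s (al x). Proof. by case: hs => [[]]. Qed.
Lemma sec_rho x v : i (rho x v) = ext_b2 (s x) (i v). Proof. by case: hs => [_ []]. Qed.
Lemma sec_D x1 x2 v : i (D x1 x2 v) = ext_b3 (s x1) (s x2) (i v).
Proof. by case: hs => [_ []]. Qed.
Lemma sec_theta x1 x2 v : i (theta x1 x2 v) = ext_b3 (i v) (s x1) (s x2).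
Proof. by case: hs => [_ []]. Qed.

Definition sec_nu x y := i_inv (ext_b2 (s x) (s y) - s (b2 x y)).

Definition sec_om x y z := i_inv (ext_b3 (s x) (s y) (s z) - s (b3 x y z)).

Lemma i_sec_nu x y : i (sec_nu x y) = ext_b2 (s x) (s y) - s (b2 x y).
Proof. by apply: i_invK; rewrite !pE ext_p_b2 !sec_p subrr. Qed.

Lemma i_sec_om x y z : i (sec_om x y z) = ext_b3 (s x) (s y) (s z) - s (b3 x y z).
Proof. by apply: i_invK; rewrite !pE ext_p_b3 !sec_p subrr. Qed.

Definition to_ext (q : T * V) : ext_T E := s q.1 + i q.2.

Definition of_ext (y : ext_T E) : T * V := (p y, i_inv (y - s (p y))).

Lemma to_ext_hom :
  HLYA_hom twist_al (twist_b2 sec_nu) (twist_b3 sec_om)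
    (ext_al (e:=E)) (ext_b2 (e:=E)) (ext_b3 (e:=E)) to_ext.
Proof.
rewrite /to_ext; split=> [a [x u] [y v]|[x u]|[x u] [y v]|[x u] [y v] [z w]] /=.
- by rewrite !sE !iE scalerDr addrACA.
- by rewrite ext_alE sec_al ext_i_comm.
- rewrite !iE i_sec_nu !sec_rho !ext_b2E ext_b2_ii.
  by move: (HLY1 (ext_hlya E) (i u) (s y)); zmod_combine.
- rewrite !iE i_sec_om sec_D !sec_theta !ext_b3E
    !(ext_b3_iiz, ext_b3_izi, ext_b3_zii).
  by move: (HLY2 (ext_hlya E) (s x) (i v) (s z)); zmod_combine.
Qed.

Lemma ext_p_to_ext q : p (to_ext q) = q.1.
Proof. by rewrite /to_ext pE sec_p ext_p_i addr0. Qed.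

Lemma to_ext_i u : to_ext (0, u) = i u.
Proof. by rewrite /to_ext /= sE add0r. Qed.

Lemma to_ext_inj : injective to_ext.
Proof.
move=> [x u] [y v] eq_to; have eq_xy : x = y.
  by have := congr1 p eq_to; rewrite !ext_p_to_ext.
by move: eq_to; rewrite /to_ext /= eq_xy => /addrI /(ext_i_inj (e:=E)) ->.
Qed.

Lemma of_extK : cancel of_ext to_ext.
Proof.
move=> y; rewrite /to_ext /= i_invK; first by rewrite addrC subrK.
by rewrite !pE sec_p subrr.
Qed.

Lemma sec_Z23 : Z23 sec_nu sec_om.
Proof. exact: twist_Z23 (HLYA_axioms_inj_hom to_ext_inj to_ext_hom (ext_hlya E)). Qed.

Lemma twist_ext_equiv_ext : ext_equiv (twist_ext sec_Z23) E.
Proof.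
by exists to_ext; split; [exact: to_ext_hom | exact: to_ext_i | exact: ext_p_to_ext].
Qed.

Lemma ext_equiv_twist_ext : ext_equiv E (twist_ext sec_Z23).
Proof.
exists of_ext; split=> [|v|y] //=.
- exact: (HLYA_hom_inv to_ext_inj to_ext_hom of_extK).
- by apply: to_ext_inj; rewrite of_extK to_ext_i.
Qed.

End ExtensionSection.

Definition ext_section (E : ext) : T -> ext_T E :=
  proj1_sig (constructive_indefinite_description _ (ext_induces E)).

Lemma ext_sectionP (E : ext) : is_section (ext_section E).
Proof. exact: proj2_sig (constructive_indefinite_description _ (ext_induces E)). Qed.

End Classification.

Unset Implicit Arguments.
Theorem theorem4p7 (K : closedFieldType)
  (hK2 : (2%:R : K) != 0) (hK3 : (3%:R : K) != 0)
  (T : lmodType K) (al : T -> T) (b2 : T -> T -> T) (b3 : T -> T -> T -> T)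
  (hT : HLYA_axioms al b2 b3)
  (V : lmodType K) (beta : V -> V) (rho : T -> V -> V) (D theta : T -> T -> V -> V)
  (hR : rep_axioms al b2 b3 beta rho D theta) :
  exists Phi : ext al b2 b3 beta rho D theta -> (T -> T -> V) * (T -> T -> T -> V),
    [/\ (* Phi lands in Z^2 x Z^3 *)
        forall E, Z23 al b2 b3 beta rho D theta (Phi E).1 (Phi E).2,
        (* well defined on equivalence classes *)
        forall E1 E2, ext_equiv E1 E2 ->
          cohomologous al b2 b3 beta rho D theta (Phi E1) (Phi E2),
        (* injective on classes *)
        forall E1 E2, cohomologous al b2 b3 beta rho D theta (Phi E1) (Phi E2) ->
          ext_equiv E1 E2 &
        (* surjective onto H^2 x H^3 *)
        forall nu om, Z23 al b2 b3 beta rho D theta nu om ->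
          exists E, cohomologous al b2 b3 beta rho D theta (Phi E) (nu, om)].
Proof.
have hZ E := sec_Z23 hR (ext_sectionP E).
have tw_E E := twist_ext_equiv_ext hT hR (ext_sectionP E).
have E_tw E := ext_equiv_twist_ext hT hR (ext_sectionP E).
exists (fun E => (sec_nu (ext_section E), sec_om (ext_section E))); split.
- exact: hZ.
- move=> E1 E2 E12; apply: twist_ext_equiv_cohomologous.
  exact: ext_equiv_trans (tw_E E1) (ext_equiv_trans E12 (E_tw E2)).
- move=> E1 E2 /(cohomologous_twist_ext_equiv hT hR (hZ E1) (hZ E2)) E12.
  exact: ext_equiv_trans (E_tw E1) (ext_equiv_trans E12 (tw_E E2)).
- move=> nu om hZnu; exists (twist_ext hT hR hZnu).
  exact: twist_ext_equiv_cohomologous (tw_E _).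
Qed.
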